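(* Let $\mathfrak{F}$ be an assignment to every finite-dimensional quantum system $A$ of a set $\mathfrak{F}(A)$ of density matrices on $A$ (the free states), such that the family of free states is closed under tensor products, partial traces, and permutations (swaps) of subsystems. Then the Choi-defined (CD) operations associated with $\mathfrak{F}$ form a resource theory — i.e., for all systems the identity channel, the swap channel, and the discarding channel (partial trace) are CD operations, and sequential and parallel compositions of CD operations are CD operations — if and only if for all systems $A$ and $B$: (1) the state $\frac{1}{d_A}\Phi_{AA'}$ belongs to $\mathfrak{F}(AA')$; and (2) whenever $\rho_A\in\mathfrak{F}(A)$ and $\mu_{BA'}\in\mathfrak{F}(BA')$ with $\mu_{BA'}$ the renormalized Choi matrix of a quantum channel (i.e. $\operatorname{tr}_B\mu_{BA'}=\frac{1}{d_A}\mathbb{1}_{A'}$), the state $d_A\,\mu_{B:A'}*\rho_A=d_A\operatorname{tr}_A[\mu_{BA}(\mathbb{1}_B\otimes\rho_A^{T})]$ belongs to $\mathfrak{F}(B)$.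
   Context: Systems are finite-dimensional Hilbert spaces; $d_A$ is the dimension of $A$ and $A'$ is a copy of $A$. Fix an orthonormal basis $\{|x\rangle_A\}$ of each system; the unnormalized Choi state is $\Phi_{AA'}=\sum_{x,y}|x\rangle\langle y|_A\otimes|x\rangle\langle y|_{A'}$. The Choi matrix of a channel $\mathcal{M}_{A\to B}$ is $M_{B:A'}=(\mathcal{M}_{A\to B}\otimes\mathcal{I}_{A'})(\Phi_{AA'})$ (output system first, input copy second), and its renormalized Choi matrix is $\mu_{B:A'}=\frac{1}{d_A}M_{B:A'}$, a state with $\operatorname{tr}_B\mu_{BA'}=\frac1{d_A}\mathbb{1}_{A'}$; conversely such a state determines the channel $\mathcal{M}_{A\to B}(\rho_A)=d_A\operatorname{tr}_A[\mu_{BA}(\mathbb{1}_B\otimes\rho_A^T)]$, with $T$ the transpose in the fixed basis. The link product is $N_{C:B'}*M_{B:A'}=\operatorname{tr}_{BB'}[(N_{C:B'}\otimes M_{B:A'})(\mathbb{1}_C\otimes\Phi_{B'B}\otimes\mathbb{1}_{A'})]$; for a state $\rho_A$ (viewed as Choi matrix of a preparation) $M_{B:A'}*\rho_A=\operatorname{tr}_A[M_{B:A}(\mathbb{1}_B\otimes\rho_A^T)]$. A channel $\mathcal{M}_{A\to B}$ is a Choi-defined (CD) operation associated with $\mathfrak{F}$ if its renormalized Choi matrix lies in $\mathfrak{F}(BA')$; states are regarded as channels from the trivial one-dimensional system, whose renormalized Choi matrix is the state itself. A Choi-defined resource theory (CDRT) is a resource theory whose free operations are exactly the CD operations associated with its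 free states. *)

(* Finite-dimensional quantum theory over the complex numbers
   C = R[i] (R : realType), with systems modelled as finite types of basis
   labels (the fixed orthonormal basis {|x>}), d_A = #|A|, composite systems
   as product types, and operators on A as finite functions A * A -> C
   (X (x, y) = <x| X |y>). *)
From HB Require Import structures.
From mathcomp Require Import all_boot all_order all_algebra.
From mathcomp Require Import complex reals.
Set Implicit Arguments.
Unset Strict Implicit.
Unset Printing Implicit Defensive.
Import Order.TTheory GRing.Theory Num.Theory.
Local Open Scope ring_scope.

Definition op (R : realType) (T : finType) := {ffun T * T -> R[i]}.

Definition eop {R : realType} {T : finType} (x y : T) : op R T :=
  [ffun p => ((p.1 == x) && (p.2 == y))%:R].

Definition idop {R : realType} {T : finType} : op R T :=
  [ffun p => (p.1 == p.2)%:R].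

Definition opmul {R : realType} {T : finType} (X Y : op R T) : op R T :=
  [ffun p => \sum_(k : T) X (p.1, k) * Y (k, p.2)].

Definition optr {R : realType} {T : finType} (X : op R T) : R[i] :=
  \sum_(x : T) X (x, x).

Definition optrans {R : realType} {T : finType} (X : op R T) : op R T :=
  [ffun p => X (p.2, p.1)].

Definition tensor {R : realType} {A B : finType} (X : op R A) (Y : op R B)
  : op R (A * B)%type :=
  [ffun p => X (p.1.1, p.2.1) * Y (p.1.2, p.2.2)].

Definition ptr2 {R : realType} {A B : finType} (X : op R (A * B)%type) : op R A :=
  [ffun p => \sum_(b : B) X ((p.1, b), (p.2, b))].
Definition ptr1 {R : realType} {A B : finType} (X : op R (A * B)%type) : op R B :=
  [ffun p => \sum_(a : A) X ((a, p.1), (a, p.2))].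

(* relabelling of the basis along a map f : X -> Y (used for bijections) *)
Definition relabel {R : realType} {X Y : finType} (f : X -> Y) (M : op R X)
  : op R Y :=
  [ffun p => \sum_(x : X) \sum_(x' : X)
               ((f x == p.1) && (f x' == p.2))%:R * M (x, x')].

Definition psd {R : realType} {T : finType} (X : op R T) : Prop :=
  forall v : T -> R[i],
    0 <= \sum_(x : T) \sum_(y : T) (v x)^* * X (x, y) * v y.

Definition density {R : realType} {T : finType} (X : op R T) : Prop :=
  psd X /\ optr X = 1.

Definition Phi {R : realType} {A : finType} : op R (A * A)%type :=
  \sum_(x : A) \sum_(y : A) tensor (eop x y) (eop x y).

(* permutations of subsystems: the basis relabellings generated by the
   swap AB -> BA, the (trivial) re-bracketings (AB)C <-> A(BC), acting on
   any factor of a composite system, and composition. *)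
Inductive subsys_perm : forall X Y : finType, (X -> Y) -> Prop :=
| sp_id (X : finType) : subsys_perm (fun x : X => x)
| sp_swap (X Y : finType) :
    subsys_perm (fun p : (X * Y)%type => (p.2, p.1))
| sp_assoc (X Y Z : finType) :
    subsys_perm (fun p : ((X * Y) * Z)%type => (p.1.1, (p.1.2, p.2)))
| sp_assocV (X Y Z : finType) :
    subsys_perm (fun p : (X * (Y * Z))%type => ((p.1, p.2.1), p.2.2))
| sp_prod (X Y X' Y' : finType) (f : X -> Y) (g : X' -> Y') :
    subsys_perm f -> subsys_perm g ->
    subsys_perm (fun p : (X * X')%type => (f p.1, g p.2))
| sp_comp (X Y Z : finType) (f : X -> Y) (g : Y -> Z) :
    subsys_perm f -> subsys_perm g -> subsys_perm (fun x : X => g (f x)).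

Definition free_family (R : realType) :=
  forall T : finType, op R T -> Prop.

Definition free_states_ok {R : realType} (F : free_family R) : Prop :=
  [/\ (forall (T : finType) (rho : op R T), F T rho -> density rho),
      (forall (A B : finType) (rho : op R A) (sigma : op R B),
          F A rho -> F B sigma -> F (A * B)%type (tensor rho sigma)),
      (forall (A B : finType) (rho : op R (A * B)%type),
          F (A * B)%type rho -> F A (ptr2 rho) /\ F B (ptr1 rho)) &
      (forall (X Y : finType) (f : X -> Y) (rho : op R X),
          subsys_perm f -> F X rho -> F Y (relabel f rho))].

Definition oplinear {R : realType} {A B : finType} (M : op R A -> op R B)
  : Prop :=
  forall (c : R[i]) (X Y : op R A), M (c *: X + Y) = c *: M X + M Y.

Definition partensor {R : realType} {A B C D : finType}
  (M : op R A -> op R B) (N : op R C -> op R D) (X : op R (A * C)%type)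
  : op R (B * D)%type :=
  \sum_(a : A) \sum_(a' : A) \sum_(c : C) \sum_(c' : C)
     X ((a, c), (a', c')) *: tensor (M (eop a a')) (N (eop c c')).

Definition channel {R : realType} {A B : finType} (M : op R A -> op R B)
  : Prop :=
  [/\ oplinear M,
      (forall X : op R A, optr (M X) = optr X) &
      (forall (E : finType) (X : op R (A * E)%type),
          psd X -> psd (partensor M (@id (op R E)) X))].

(* Choi matrix M_{B:A'} = (M (x) I_{A'})(Phi_{AA'}) and its renormalization *)
Definition choi {R : realType} {A B : finType} (M : op R A -> op R B)
  : op R (B * A)%type :=
  \sum_(x : A) \sum_(y : A) tensor (M (eop x y)) (eop x y).

Definition rchoi {R : realType} {A B : finType} (M : op R A -> op R B)
  : op R (B * A)%type :=
  (#|A|%:R)^-1 *: choi M.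

Definition CD {R : realType} (F : free_family R) {A B : finType}
  (M : op R A -> op R B) : Prop :=
  F (B * A)%type (rchoi M).

Definition CD_resource_theory {R : realType} (F : free_family R) : Prop :=
  [/\
      (forall A : finType, (0 < #|A|)%N -> CD F (@id (op R A))),
      (forall A B : finType, (0 < #|A|)%N -> (0 < #|B|)%N ->
          CD F (relabel (R := R) (fun p : A * B => (p.2, p.1)))),
      (forall A B : finType, (0 < #|A|)%N -> (0 < #|B|)%N ->
          CD F (@ptr1 R A B)),
      (forall (A B C : finType) (M : op R A -> op R B) (N : op R B -> op R C),
          channel M -> channel N -> CD F M -> CD F N -> CD F (N \o M)) &
      (forall (A B C D : finType) (M : op R A -> op R B)
              (N : op R C -> op R D),
          channel M -> channel N -> CD F M -> CD F N ->
          CD F (partensor M N))].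

Definition link_state {R : realType} {A B : finType}
  (mu : op R (B * A)%type) (rho : op R A) : op R B :=
  ptr2 (opmul mu (tensor idop (optrans rho))).

From mathcomp Require Import all_boot all_order all_algebra.
From mathcomp Require Import complex reals.
From mathcomp Require Import ring.
Import GRing.Theory Num.Theory.
Local Open Scope ring_scope.

(* The renormalized Choi matrix identifies the channels A -> B with the states mu on
   B * A whose marginal on A is maximally mixed; the inverse is choi_map mu, which maps
   X to d_A (mu * X).
   (->) The identity channel has Choi matrix Phi / d_A, which is (1).  For (2), both
   choi_map mu and the preparation of rho (the channel with Choi matrix rho (x) 1 / d_A)
   are CD channels; choi_map mu is completely positive because (choi_map mu (x) id)(X)
   is a compression of d_A mu (x) X.  Their composite has Choi matrix
   choi_map mu rho (x) 1 / d_A, and its first marginal is the state of (2).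
   (<-) The Choi matrices of the swap, of the discarding map and of a parallel
   composition are relabellings of the free states Phi_A / d_A (x) Phi_B / d_B,
   1 / d_A (x) Phi_B / d_B and mu_M (x) mu_N.  For a sequential composition,
   mu_{N o M} = (N (x) id)(mu_M) = d_B d_A (mu_{N (x) id} * mu_M) is free by (2),
   since mu_{N (x) id} is free as a parallel composition. *)

Set Implicit Arguments.
Unset Strict Implicit.
Unset Printing Implicit Defensive.

Section Operators.
Variable R : realType.
Local Notation C := R[i].

Lemma sum_delta (T : finType) (a : T) (f : T -> C) :
  \sum_x f x * (a == x)%:R = f a.
Proof.
rewrite (bigD1 a) //= eqxx mulr1 big1 ?addr0 // => x.
by rewrite eq_sym => /negbTE ->; rewrite mulr0.
Qed.

Lemma sum_delta2 (S T : finType) (a : S) (b : T) (f : S -> T -> C) :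
  \sum_x \sum_y f x y * ((a == x)%:R * (b == y)%:R) = f a b.
Proof.
under eq_bigr do under eq_bigr do rewrite mulrA mulrAC.
by under eq_bigr do rewrite -mulr_suml sum_delta; rewrite sum_delta.
Qed.

Lemma sum_delta2C (S T : finType) (a : S) (b : T) (f : S -> T -> C) :
  \sum_x \sum_y f x y * ((x == a)%:R * (y == b)%:R) = f a b.
Proof.
by under eq_bigr => x _ do under eq_bigr => y _ do rewrite (eq_sym x) (eq_sym y);
  exact: sum_delta2.
Qed.

Lemma sum_pair (A B : finType) (f : A * B -> C) :
  \sum_p f p = \sum_a \sum_b f (a, b).
Proof. by rewrite pair_bigA; apply: eq_bigr => -[]. Qed.

Lemma exchange_big_pairs (I J K L : finType) (F : I -> J -> K -> L -> C) :
  \sum_i \sum_j \sum_k \sum_l F i j k l = \sum_k \sum_l \sum_i \sum_j F i j k l.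
Proof.
under eq_bigr do rewrite exchange_big; rewrite exchange_big.
by under eq_bigr do under eq_bigr do rewrite exchange_big; under eq_bigr do rewrite exchange_big.
Qed.

Lemma natr_card_neq0 (T : finType) : (0 < #|T|)%N -> (#|T|%:R : C) != 0.
Proof. by rewrite pnatr_eq0 -lt0n. Qed.

Lemma ffunZE (T : finType) (c : C) (X : op R T) p : (c *: X) p = c * X p.
Proof. by rewrite ffunE. Qed.

Lemma eopE (T : finType) (x y u v : T) :
  (eop x y : op R T) (u, v) = (u == x)%:R * (v == y)%:R.
Proof. by rewrite ffunE /= -mulnb natrM. Qed.

Lemma idopE (T : finType) (x y : T) : (idop : op R T) (x, y) = (x == y)%:R.
Proof. by rewrite ffunE. Qed.

Lemma tensorE (A B : finType) (X : op R A) (Y : op R B) a b a' b' :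
  tensor X Y ((a, b), (a', b')) = X (a, a') * Y (b, b').
Proof. by rewrite ffunE. Qed.

Lemma ptr1E (A B : finType) (X : op R (A * B)%type) b b' :
  ptr1 X (b, b') = \sum_a X ((a, b), (a, b')).
Proof. by rewrite ffunE. Qed.

Lemma ptr2E (A B : finType) (X : op R (A * B)%type) a a' :
  ptr2 X (a, a') = \sum_b X ((a, b), (a', b)).
Proof. by rewrite ffunE. Qed.

Lemma choiE (A B : finType) (M : op R A -> op R B) b a b' a' :
  choi M ((b, a), (b', a')) = M (eop a a') (b, b').
Proof.
rewrite /choi sum_ffunE; under eq_bigr do rewrite sum_ffunE.
by under eq_bigr do under eq_bigr do rewrite tensorE eopE; rewrite sum_delta2.
Qed.

Lemma rchoiE (A B : finType) (M : op R A -> op R B) b a b' a' :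
  rchoi M ((b, a), (b', a')) = #|A|%:R^-1 * M (eop a a') (b, b').
Proof. by rewrite ffunZE choiE. Qed.

Lemma PhiE (A : finType) b a b' a' :
  (Phi : op R (A * A)%type) ((b, a), (b', a')) = (b == a)%:R * (b' == a')%:R.
Proof. by rewrite -eopE; exact: (choiE (@id (op R A))). Qed.

Lemma partensorE (A B C' D : finType) (M : op R A -> op R B) (N : op R C' -> op R D)
    (X : op R (A * C')%type) b d b' d' :
  partensor M N X ((b, d), (b', d')) =
  \sum_a \sum_a' \sum_c \sum_c'
     X ((a, c), (a', c')) * (M (eop a a') (b, b') * N (eop c c') (d, d')).
Proof.
rewrite /partensor sum_ffunE; apply: eq_bigr => a _; rewrite sum_ffunE.
apply: eq_bigr => a' _; rewrite sum_ffunE; apply: eq_bigr => c _; rewrite sum_ffunE.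
by apply: eq_bigr => c' _; rewrite ffunZE tensorE.
Qed.

Lemma partensor_idE (A B E : finType) (K : op R A -> op R B) (X : op R (A * E)%type)
    b e b' e' :
  partensor K id X ((b, e), (b', e')) =
  \sum_a \sum_a' X ((a, e), (a', e')) * K (eop a a') (b, b').
Proof.
rewrite partensorE; apply: eq_bigr => a _; apply: eq_bigr => a' _.
by under eq_bigr do under eq_bigr do rewrite /= eopE mulrA; rewrite sum_delta2.
Qed.

Lemma partensor_eop (A B C' D : finType) (M : op R A -> op R B) (N : op R C' -> op R D)
    a c a' c' :
  partensor M N (eop (a, c) (a', c')) = tensor (M (eop a a')) (N (eop c c')).
Proof.
apply/ffunP => -[[b d] [b' d']]; rewrite partensorE tensorE.
have inner x x' : \sum_y \sum_y' eop (a, c) (a', c') ((x, y), (x', y')) *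
      (M (eop x x') (b, b') * N (eop y y') (d, d')) =
    M (eop x x') (b, b') * N (eop c c') (d, d') * ((a == x)%:R * (a' == x')%:R).
  rewrite -(sum_delta2 c c' (fun y y' => M (eop x x') (b, b') * N (eop y y') (d, d') *
                                         ((a == x)%:R * (a' == x')%:R))).
  apply: eq_bigr => y _; apply: eq_bigr => y' _.
  rewrite eopE !xpair_eqE -!mulnb !natrM (eq_sym x) (eq_sym x') (eq_sym y) (eq_sym y').
  ring.
by under eq_bigr do under eq_bigr do rewrite inner; rewrite sum_delta2.
Qed.

Lemma tensor_eop (A B : finType) (a a' : A) (b b' : B) :
  tensor (eop a a') (eop b b') = eop (a, b) (a', b') :> op R (A * B)%type.
Proof.
apply/ffunP => -[[x y] [x' y']].
by rewrite tensorE !eopE !xpair_eqE -!mulnb !natrM; ring.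
Qed.

Lemma optr_eop (T : finType) (x y : T) : optr (eop x y : op R T) = (x == y)%:R.
Proof.
rewrite /optr; under eq_bigr => z _ do rewrite eopE (eq_sym z y).
by rewrite sum_delta eq_sym.
Qed.

Lemma optr_tensor (A B : finType) (X : op R A) (Y : op R B) :
  optr (tensor X Y) = optr X * optr Y.
Proof.
rewrite /optr sum_pair mulr_suml; apply: eq_bigr => a _.
by rewrite mulr_sumr; apply: eq_bigr => b _; rewrite tensorE.
Qed.

Lemma ptr1_tensor (A B : finType) (X : op R A) (Y : op R B) :
  ptr1 (tensor X Y) = optr X *: Y.
Proof.
apply/ffunP => -[b b']; rewrite ptr1E ffunZE /optr mulr_suml.
by apply: eq_bigr => a _; rewrite tensorE.
Qed.

Lemma ptr2_tensor (A B : finType) (X : op R A) (Y : op R B) :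
  ptr2 (tensor X Y) = optr Y *: X.
Proof.
apply/ffunP => -[a a']; rewrite ptr2E ffunZE /optr mulr_suml.
by apply: eq_bigr => b _; rewrite tensorE mulrC.
Qed.

Lemma ptr2_Phi (A : finType) : ptr2 (Phi : op R (A * A)%type) = idop.
Proof.
apply/ffunP => -[a a']; rewrite ptr2E idopE.
by under eq_bigr do rewrite PhiE; rewrite sum_delta.
Qed.

Lemma op_expand (T : finType) (X : op R T) : X = \sum_x \sum_y X (x, y) *: eop x y.
Proof.
apply/ffunP => -[u v]; rewrite sum_ffunE; under eq_bigr do rewrite sum_ffunE.
by under eq_bigr do under eq_bigr do rewrite ffunZE eopE; rewrite sum_delta2.
Qed.

Lemma ptr2Z (A B : finType) (c : C) (X : op R (A * B)%type) :
  ptr2 (c *: X) = c *: ptr2 X.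
Proof.
apply/ffunP => -[a a']; rewrite ffunZE !ptr2E mulr_sumr.
by apply: eq_bigr => b _; rewrite ffunZE.
Qed.

Lemma relabel_bij (X Y : finType) (f : X -> Y) (g : Y -> X) :
  cancel f g -> cancel g f -> forall (M : op R X) y y', relabel f M (y, y') = M (g y, g y').
Proof.
move=> fK gK M y y'; rewrite ffunE /=.
under eq_bigr do under eq_bigr do rewrite !(can2_eq fK gK) -mulnb natrM mulrC.
exact: sum_delta2C.
Qed.

Lemma density_card (T : finType) (rho : op R T) : density rho -> (0 < #|T|)%N.
Proof.
move=> [_ tr_rho]; rewrite lt0n; apply: contra_eqN tr_rho => /eqP T0.
rewrite /optr big1 1?eq_sym ?oner_eq0 // => x _.
by have := card0_eq T0 x; rewrite inE.
Qed.

Section Linear.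
Variables (A B : finType) (K : op R A -> op R B).
Hypothesis linK : oplinear K.

Lemma oplinear0 : K 0 = 0.
Proof.
by have := linK 1 0 0; rewrite scaler0 addr0 scale1r -{1}[K 0]addr0 => /addrI /esym.
Qed.

Lemma oplinearD X Y : K (X + Y) = K X + K Y.
Proof. by have := linK 1 X Y; rewrite !scale1r. Qed.

Lemma oplinearZ c X : K (c *: X) = c *: K X.
Proof. by have := linK c X 0; rewrite !addr0 oplinear0 addr0. Qed.

Lemma oplinear_expandE X b b' :
  K X (b, b') = \sum_x \sum_y X (x, y) * K (eop x y) (b, b').
Proof.
rewrite {1}[X]op_expand (big_morph K oplinearD oplinear0) sum_ffunE.
apply: eq_bigr => x _; rewrite (big_morph K oplinearD oplinear0) sum_ffunE.
by apply: eq_bigr => y _; rewrite oplinearZ ffunZE.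
Qed.

End Linear.
End Operators.

Section ChoiMaps.
Variable R : realType.
Local Notation C := R[i].

Definition choi_map (A B : finType) (mu : op R (B * A)%type) : op R A -> op R B :=
  fun X => #|A|%:R *: link_state mu X.

Lemma link_stateE (A B : finType) (mu : op R (B * A)%type) (X : op R A) b b' :
  link_state mu X (b, b') = \sum_x \sum_y mu ((b, x), (b', y)) * X (x, y).
Proof.
rewrite /link_state ptr2E; apply: eq_bigr => x _; rewrite ffunE sum_pair exchange_big /=.
apply: eq_bigr => y _; under eq_bigr => b1 _ do rewrite tensorE idopE (eq_sym b1) mulrCA mulrC.
by rewrite sum_delta ffunE.
Qed.

Lemma choi_mapE (A B : finType) (mu : op R (B * A)%type) X b b' :
  choi_map mu X (b, b') = #|A|%:R * \sum_x \sum_y mu ((b, x), (b', y)) * X (x, y).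
Proof. by rewrite ffunZE link_stateE. Qed.

Lemma choi_map_eop (A B : finType) (mu : op R (B * A)%type) a a' b b' :
  choi_map mu (eop a a') (b, b') = #|A|%:R * mu ((b, a), (b', a')).
Proof.
by rewrite choi_mapE; under eq_bigr do under eq_bigr do rewrite eopE; rewrite sum_delta2C.
Qed.

Lemma choi_map_oplinear (A B : finType) (mu : op R (B * A)%type) :
  oplinear (choi_map mu).
Proof.
move=> c X Y; apply/ffunP => -[b b']; rewrite choi_mapE [RHS]ffunE ffunZE !choi_mapE.
rewrite mulrCA -mulrDr; congr (_ * _); rewrite mulr_sumr -big_split; apply: eq_bigr => x _.
rewrite !mulr_sumr -big_split; apply: eq_bigr => y _.
by rewrite /= ffunE ffunZE; ring.
Qed.

Lemma rchoi_choi_map (A B : finType) (mu : op R (B * A)%type) :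
  (0 < #|A|)%N -> rchoi (choi_map mu) = mu.
Proof.
move=> A_gt0; apply/ffunP => -[[b a] [b' a']].
by rewrite rchoiE choi_map_eop mulKf ?natr_card_neq0.
Qed.

Lemma choi_map_rchoi (A B : finType) (K : op R A -> op R B) X :
  (0 < #|A|)%N -> oplinear K -> choi_map (rchoi K) X = K X.
Proof.
move=> A_gt0 linK; apply/ffunP => -[b b'].
rewrite choi_mapE (oplinear_expandE linK) mulr_sumr; apply: eq_bigr => x _.
rewrite mulr_sumr; apply: eq_bigr => y _.
by rewrite rchoiE mulrA mulVKf ?natr_card_neq0 // mulrC.
Qed.

Lemma ptr1_rchoi (A B : finType) (K : op R A -> op R B) :
  (forall x y, optr (K (eop x y)) = optr (eop x y)) ->
  ptr1 (rchoi K) = #|A|%:R^-1 *: idop.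
Proof.
move=> trK; apply/ffunP => -[a a']; rewrite ptr1E ffunZE idopE.
by under eq_bigr do rewrite rchoiE; rewrite -mulr_sumr -/(optr _) trK optr_eop.
Qed.

Lemma optr_choi_map (A B : finType) (mu : op R (B * A)%type) X :
  (0 < #|A|)%N -> ptr1 mu = #|A|%:R^-1 *: idop -> optr (choi_map mu X) = optr X.
Proof.
move=> A_gt0 mu_tp; rewrite /optr; under eq_bigr do rewrite choi_mapE.
rewrite -mulr_sumr exchange_big /=; under eq_bigr do rewrite exchange_big /=.
have ptr1_mu x y : \sum_b mu ((b, x), (b, y)) = #|A|%:R^-1 * (x == y)%:R.
  by rewrite -ptr1E mu_tp ffunZE idopE.
under eq_bigr do under eq_bigr do rewrite -mulr_suml ptr1_mu mulrAC.
by under eq_bigr do rewrite sum_delta; rewrite -mulr_sumr mulVKf ?natr_card_neq0.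
Qed.

Lemma partensor_oplinear (A B C' D : finType) (M : op R A -> op R B)
    (N : op R C' -> op R D) : oplinear (partensor M N).
Proof.
move=> c X Y; apply/ffunP => -[[b d] [b' d']]; rewrite ffunE ffunZE !partensorE.
do 4!(rewrite mulr_sumr -big_split; apply: eq_bigr => ? _).
by rewrite /= ffunE ffunZE; ring.
Qed.

Lemma rchoi_comp (A B C' : finType) (M : op R A -> op R B) (N : op R B -> op R C') :
  oplinear N -> rchoi (N \o M) = partensor N id (rchoi M).
Proof.
move=> linN; apply/ffunP => -[[c a] [c' a']].
rewrite rchoiE partensor_idE /= (oplinear_expandE linN) mulr_sumr.
apply: eq_bigr => b _; rewrite mulr_sumr; apply: eq_bigr => b' _.
by rewrite rchoiE mulrA.
Qed.

Lemma partensor_id_tensor (A B E : finType) (K : op R A -> op R B) (X : op R A)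
    (Y : op R E) :
  oplinear K -> partensor K id (tensor X Y) = tensor (K X) Y.
Proof.
move=> linK; apply/ffunP => -[[b e] [b' e']].
rewrite partensor_idE tensorE (oplinear_expandE linK) mulr_suml.
apply: eq_bigr => a _; rewrite mulr_suml; apply: eq_bigr => a' _.
by rewrite tensorE; ring.
Qed.

End ChoiMaps.

Section Positivity.
Variable R : realType.
Local Notation C := R[i].

Definition qform (T : finType) (X : op R T) (v : T -> C) : C :=
  \sum_x \sum_y (v x)^* * X (x, y) * v y.

Definition outer (T : finType) (u : T -> C) : op R T := [ffun p => u p.1 * (u p.2)^*].

Definition sandwich (S T : finType) (W : S -> T -> C) (X : op R T) : op R S :=
  [ffun p => \sum_t \sum_t' (W p.1 t)^* * X (t, t') * W p.2 t'].

Lemma qform_two_points (T : finType) (X : op R T) x y a b :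
  qform X (fun z => a * (x == z)%:R + b * (y == z)%:R) =
  a^* * X (x, x) * a + a^* * X (x, y) * b + b^* * X (y, x) * a + b^* * X (y, y) * b.
Proof.
have corner (u v : T) (c d : C) :
    \sum_z \sum_w c * (u == z)%:R * X (z, w) * (d * (v == w)%:R) = c * X (u, v) * d.
  rewrite -(sum_delta2 u v (fun z w => c * X (z, w) * d)).
  by apply: eq_bigr => z _; apply: eq_bigr => w _; ring.
rewrite /qform.
under eq_bigr do under eq_bigr do
  rewrite rmorphD !rmorphM /= !conjC_nat !mulrDl !mulrDr.
by under eq_bigr do rewrite !big_split; rewrite !big_split /= !corner !addrA.
Qed.

Lemma psd_herm (T : finType) (X : op R T) x y : psd X -> X (y, x) = (X (x, y))^*.
Proof.
move=> psdX.
pose Q a b := qform X (fun z => a * (x == z)%:R + b * (y == z)%:R).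
have Q_real a b : (Q a b)^* = Q a b by apply/CrealP/ger0_real; exact: psdX.
have := Q_real 1 0; have := Q_real 0 1; have := Q_real 1 1; have := Q_real 1 'i.
rewrite /Q !qform_two_points.
rewrite !conjC0 !conjC1 !mul0r !mulr0 !mul1r !mulr1 !addr0 !add0r conjCi.
set p := X (x, x); set q := X (y, y); set a := X (x, y); set b := X (y, x).
move=> + + q_real p_real; rewrite !rmorphD !rmorphM !rmorphN /= conjCi p_real q_real.
move=> /eqP; rewrite -subr_eq0 => /eqP Ei /eqP; rewrite -subr_eq0 => /eqP E1.
(* [E1] and [Ei] say that the form is real at e_x + e_y and at e_x + 'i e_y;
   as ['i * 'i = -1], the combination below is [2 * (a^* - b)]. *)
match goal with Ei : ?ei = 0, E1 : ?e1 = 0 |- _ =>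
  have : 2 * (a^* - b) = e1 + 'i * ei + (1 + 'i * 'i) * (a^* - b^* + a - b) by ring end.
rewrite Ei E1 mulr0 addr0 -expr2 sqrCi addrN mul0r addr0 => /eqP.
by rewrite mulf_eq0 pnatr_eq0 /= subr_eq0 eq_sym => /eqP.
Qed.

Lemma psd_gram (T : finType) (X : op R T) : psd X ->
  exists (d : 'I_#|T| -> C) (u : 'I_#|T| -> T -> C),
    (forall k, 0 <= d k) /\ X = \sum_k d k *: outer (u k).
Proof.
move=> psdX.
pose A : 'M[C]_#|T| := \matrix_(i, j) X (enum_val i, enum_val j).
have A_herm : A \is hermsymmx.
  apply/is_hermitianmxP; rewrite expr0 scale1r; apply/matrixP => i j.
  by rewrite !mxE (psd_herm _ _ psdX).
have /orthomx_spectralP := hermitian_normalmx A_herm.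
set P := spectralmx A; set D := spectral_diag A => AE.
have P_unitary : P \is unitarymx by exact: spectral_unitarymx.
rewrite invmx_unitary // in AE.
pose u k x := (P k (enum_rank x))^*.
have sum_enum (f : T -> C) : \sum_x f x = \sum_(i < #|T|) f (enum_val i).
  exact: (big_enum_val (A := predT)).
exists (fun k => D 0 k), u; split => [k|].
  have -> : D 0 k = qform X (u k).
    have -> : D 0 k = (P *m A *m P^t*%sesqui) k k.
      rewrite AE !mulmxA; have /unitarymxP -> := P_unitary.
      by rewrite mul1mx mulmxtVK // mxE eqxx mulr1n.
    rewrite mxE; under eq_bigr do rewrite !mxE mulr_suml.
    rewrite exchange_big /qform sum_enum; apply: eq_bigr => i _.
    rewrite sum_enum; apply: eq_bigr => j _.
    by rewrite !mxE /u !enum_valK conjCK.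
  exact: psdX.
apply/ffunP => -[x y]; rewrite sum_ffunE.
have -> : X (x, y) = A (enum_rank x) (enum_rank y) by rewrite mxE !enum_rankK.
rewrite AE mul_mx_diag !mxE; apply: eq_bigr => k _.
by rewrite !mxE ffunZE ffunE /u conjCK; ring.
Qed.

Lemma qform_sandwich (S T : finType) (W : S -> T -> C) (X : op R T) v :
  qform (sandwich W X) v = qform X (fun t => \sum_s v s * W s t).
Proof.
rewrite /qform; under eq_bigr do under eq_bigr do rewrite ffunE /= mulr_sumr mulr_suml.
under eq_bigr do under eq_bigr do under eq_bigr do rewrite mulr_sumr mulr_suml.
rewrite exchange_big_pairs; apply: eq_bigr => t _; apply: eq_bigr => t' _.
rewrite rmorph_sum !mulr_suml; apply: eq_bigr => s _.
rewrite mulr_sumr; apply: eq_bigr => s' _.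
by rewrite rmorphM; ring.
Qed.

Lemma psd_sandwich (S T : finType) (W : S -> T -> C) (X : op R T) :
  psd X -> psd (sandwich W X).
Proof.
by move=> psdX v; change (0 <= qform (sandwich W X) v); rewrite qform_sandwich; apply: psdX.
Qed.

Lemma psd_scale (T : finType) (c : C) (X : op R T) : 0 <= c -> psd X -> psd (c *: X).
Proof.
move=> c_ge0 psdX v; change (0 <= qform (c *: X) v).
have -> : qform (c *: X) v = c * qform X v.
  rewrite /qform mulr_sumr; apply: eq_bigr => x _; rewrite mulr_sumr.
  by apply: eq_bigr => y _; rewrite ffunZE; ring.
exact: mulr_ge0 c_ge0 (psdX v).
Qed.

Lemma psd_sum (I T : finType) (X : I -> op R T) :
  (forall i, psd (X i)) -> psd (\sum_i X i).
Proof.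
move=> psdX; apply: (big_ind (@psd R T)) => [v|Y Z psdY psdZ v|i _]; last exact: psdX.
  by rewrite big1 // => x _; rewrite big1 // => y _; rewrite ffunE mulr0 mul0r.
change (0 <= qform (Y + Z) v).
have -> : qform (Y + Z) v = qform Y v + qform Z v.
  rewrite /qform -big_split; apply: eq_bigr => x _; rewrite -big_split.
  by apply: eq_bigr => y _; rewrite ffunE /=; ring.
exact: addr_ge0 (psdY v) (psdZ v).
Qed.

Lemma tensor_outer (S T : finType) (u : S -> C) (X : op R T) :
  tensor (outer u) X = sandwich (fun p t => (u p.1)^* * (p.2 == t)%:R) X.
Proof.
apply/ffunP => -[[s t] [s' t']]; rewrite tensorE !ffunE /=.
transitivity (\sum_z \sum_z' u s * X (z, z') * (u s')^* * ((t == z)%:R * (t' == z')%:R)).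
  by rewrite sum_delta2; ring.
apply: eq_bigr => z _; apply: eq_bigr => z' _.
by rewrite /= rmorphM /= conjCK conjC_nat; ring.
Qed.

Lemma psd_tensor (S T : finType) (Y : op R S) (X : op R T) :
  psd Y -> psd X -> psd (tensor Y X).
Proof.
move=> /psd_gram [d [u [d_ge0 ->]]] psdX.
have -> : tensor (\sum_k d k *: outer (u k)) X = \sum_k d k *: tensor (outer (u k)) X.
  apply/ffunP => -[[s t] [s' t']]; rewrite tensorE !sum_ffunE mulr_suml.
  by apply: eq_bigr => k _; rewrite !ffunZE tensorE mulrA.
apply: psd_sum => k; apply: psd_scale => //.
by rewrite tensor_outer; exact: psd_sandwich.
Qed.

Lemma sandwich_sum_deltaE (I S T : finType) (g : S -> I -> T) (X : op R T) s s' :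
  sandwich (fun s t => (\sum_i (g s i == t))%:R) X (s, s') =
  \sum_i \sum_i' X (g s i, g s' i').
Proof.
rewrite ffunE /=; under eq_bigr do under eq_bigr do
  rewrite conjC_nat !natr_sum mulr_suml big_distrlr.
rewrite exchange_big_pairs; apply: eq_bigr => i _; apply: eq_bigr => i' _.
by under eq_bigr do under eq_bigr do rewrite /= mulrAC mulrC; rewrite sum_delta2.
Qed.

Lemma partensor_choi_map_id (A B E : finType) (mu : op R (B * A)%type)
    (X : op R (A * E)%type) :
  partensor (choi_map mu) id X =
  #|A|%:R *: sandwich (fun s t => (\sum_a (((s.1, a), (a, s.2)) == t))%:R) (tensor mu X).
Proof.
apply/ffunP => -[[b e] [b' e']].
rewrite partensor_idE ffunZE sandwich_sum_deltaE mulr_sumr; apply: eq_bigr => a _.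
rewrite mulr_sumr; apply: eq_bigr => a' _.
by rewrite choi_map_eop tensorE; ring.
Qed.

Lemma choi_map_channel (A B : finType) (mu : op R (B * A)%type) :
  (0 < #|A|)%N -> psd mu -> ptr1 mu = #|A|%:R^-1 *: idop -> channel (choi_map mu).
Proof.
move=> A_gt0 psd_mu mu_tp; split => [|X|E X psdX]; first exact: choi_map_oplinear.
  exact: optr_choi_map.
rewrite partensor_choi_map_id.
by apply: psd_scale; [exact: ler0n | apply/psd_sandwich/psd_tensor].
Qed.

End Positivity.

Section FreeStates.
Variables (R : realType) (F : free_family R).
Arguments F : clear implicits.
Hypothesis F_ok : free_states_ok F.

Lemma free_relabel (X Y : finType) (f : X -> Y) (g : Y -> X) (rho : op R X)
    (sigma : op R Y) :
  subsys_perm f -> cancel f g -> cancel g f -> F X rho ->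
  (forall y y', sigma (y, y') = rho (g y, g y')) -> F Y sigma.
Proof.
have [_ _ _ F_perm] := F_ok; move=> f_perm fK gK F_rho sigmaE.
have -> : sigma = relabel f rho.
  by apply/ffunP => -[y y']; rewrite sigmaE (relabel_bij fK gK).
exact: F_perm.
Qed.

Lemma subsys_perm_mid (X Y Z W : finType) :
  subsys_perm (fun p : ((X * Y) * (Z * W))%type => ((p.1.1, p.2.1), (p.1.2, p.2.2))).
Proof.
exact: (sp_comp (sp_comp (sp_comp (sp_comp (sp_assoc X Y (Z * W)%type)
   (sp_prod (sp_id X) (sp_assocV Y Z W))) (sp_prod (sp_id X) (sp_prod (sp_swap Y Z) (sp_id W))))
   (sp_prod (sp_id X) (sp_assoc Z Y W))) (sp_assocV X Z (Y * W)%type)).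
Qed.

Lemma CD_partensor (A B C D : finType) (M : op R A -> op R B) (N : op R C -> op R D) :
  CD F M -> CD F N -> CD F (partensor M N).
Proof.
have [_ F_tensor _ _] := F_ok; move=> CDM CDN.
apply: (free_relabel (subsys_perm_mid B A D C) _ _ (F_tensor _ _ _ _ CDM CDN)
  (g := fun p : ((B * D) * (A * C))%type => ((p.1.1, p.2.1), (p.1.2, p.2.2)))).
- by move=> [[? ?] [? ?]].
- by move=> [[? ?] [? ?]].
move=> [[b d] [a c]] [[b' d'] [a' c']] /=.
by rewrite !rchoiE tensorE !rchoiE partensor_eop tensorE card_prod natrM invfM; ring.
Qed.

Definition link_closed : Prop :=
  forall (A B : finType) (rho : op R A) (mu : op R (B * A)%type),
    F A rho -> F (B * A)%type mu -> ptr1 mu = #|A|%:R^-1 *: idop ->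
    F B (#|A|%:R *: link_state mu rho).

Section MaxEntangledFree.
Hypothesis Phi_free :
  forall A : finType, (0 < #|A|)%N -> F (A * A)%type (#|A|%:R^-1 *: Phi).

Lemma maxmixed_free (A : finType) : (0 < #|A|)%N -> F A (#|A|%:R^-1 *: idop).
Proof.
have [_ _ F_ptr _] := F_ok; move=> A_gt0.
by rewrite -ptr2_Phi -ptr2Z; exact: (F_ptr _ _ _ (Phi_free A_gt0)).1.
Qed.

Lemma CD_swap (A B : finType) : (0 < #|A|)%N -> (0 < #|B|)%N ->
  CD F (relabel (R := R) (fun p : A * B => (p.2, p.1))).
Proof.
have [_ F_tensor _ _] := F_ok; move=> A_gt0 B_gt0.
apply: (free_relabel (sp_comp (subsys_perm_mid A A B B)
          (sp_prod (sp_swap A B) (sp_id (A * B)%type)))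
          _ _ (F_tensor _ _ _ _ (Phi_free A_gt0) (Phi_free B_gt0))
  (g := fun p : ((B * A) * (A * B))%type => ((p.1.2, p.2.1), (p.1.1, p.2.2)))).
- by move=> [[? ?] [? ?]].
- by move=> [[? ?] [? ?]].
move=> [[b a] [a1 b1]] [[b' a'] [a1' b1']] /=.
have swapK (U V : finType) : cancel (fun p : U * V => (p.2, p.1)) (fun p => (p.2, p.1)).
  by case.
rewrite rchoiE tensorE !ffunZE !PhiE (relabel_bij (swapK A B) (swapK B A)) /=.
by rewrite eopE !xpair_eqE -!mulnb !natrM card_prod natrM invfM; ring.
Qed.

Lemma CD_discard (A B : finType) : (0 < #|A|)%N -> (0 < #|B|)%N ->
  CD F (@ptr1 R A B).
Proof.
have [_ F_tensor _ _] := F_ok; move=> A_gt0 B_gt0.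
apply: (free_relabel (sp_comp (sp_comp (sp_assocV A B B)
          (sp_prod (sp_swap A B) (sp_id B))) (sp_assoc B A B))
          _ _ (F_tensor _ _ _ _ (maxmixed_free A_gt0) (Phi_free B_gt0))
  (g := fun p : (B * (A * B))%type => (p.2.1, (p.1, p.2.2)))).
- by move=> [? [? ?]].
- by move=> [? [? ?]].
move=> [b [a b1]] [b' [a' b1']] /=.
rewrite rchoiE tensorE !ffunZE PhiE idopE ptr1E.
transitivity ((#|A|%:R : R[i])^-1 * #|B|%:R^-1 *
  \sum_x (x == a')%:R * ((b == b1)%:R * (b' == b1')%:R) * (a == x)%:R).
  2: by rewrite sum_delta; ring.
rewrite card_prod natrM invfM !mulr_sumr; apply: eq_bigr => x _.
by rewrite eopE !xpair_eqE -!mulnb !natrM (eq_sym x a); ring.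
Qed.

Lemma CD_id (A : finType) : (0 < #|A|)%N -> CD F (@id (op R A)).
Proof. exact: Phi_free. Qed.

Lemma link_closed_of_CD_comp :
  (forall (A B C : finType) (M : op R A -> op R B) (N : op R B -> op R C),
      channel M -> channel N -> CD F M -> CD F N -> CD F (N \o M)) ->
  link_closed.
Proof.
have [F_density F_tensor F_ptr _] := F_ok.
move=> comp_closed A B rho mu F_rho F_mu mu_tp.
have [_ tr_rho] := F_density _ _ F_rho.
have A_gt0 := density_card (F_density _ _ F_rho).
have F_mm := maxmixed_free A_gt0.
have F_prep := F_tensor _ _ _ _ F_rho F_mm.
pose prep := choi_map (tensor rho (#|A|%:R^-1 *: idop : op R A)).
have ch_prep : channel prep.
  apply: choi_map_channel => //; first exact: (F_density _ _ F_prep).1.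
  by rewrite ptr1_tensor tr_rho scale1r.
have ch_mu : channel (choi_map mu).
  by apply: choi_map_channel => //; exact: (F_density _ _ F_mu).1.
have := comp_closed _ _ _ _ _ ch_prep ch_mu.
rewrite /CD rchoi_comp; last exact: choi_map_oplinear.
rewrite !rchoi_choi_map // partensor_id_tensor; last exact: choi_map_oplinear.
move=> /(_ F_prep F_mu) /F_ptr[+ _].
by rewrite ptr2_tensor (F_density _ _ F_mm).2 scale1r.
Qed.

Lemma CD_comp (A B C : finType) (M : op R A -> op R B) (N : op R B -> op R C) :
  link_closed -> channel N -> CD F M -> CD F N -> CD F (N \o M).
Proof.
have [F_density _ _ _] := F_ok.
move=> F_link [linN trN _] CDM CDN.
have BA_gt0 : (0 < #|{: B * A}|)%N := density_card (F_density _ _ CDM).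
have A_gt0 : (0 < #|A|)%N by move: BA_gt0; rewrite card_prod muln_gt0 => /andP[].
have lin_Nid : oplinear (partensor N (@id (op R A))) by exact: partensor_oplinear.
rewrite /CD rchoi_comp // -(choi_map_rchoi _ BA_gt0 lin_Nid).
apply: F_link CDM (CD_partensor CDN (CD_id A_gt0)) _.
apply: ptr1_rchoi => -[b a] [b' a'].
by rewrite partensor_eop optr_tensor trN -optr_tensor tensor_eop.
Qed.

End MaxEntangledFree.
End FreeStates.

Unset Implicit Arguments.

Theorem theorem1 (R : realType) (F : free_family R) :
  free_states_ok F ->
  (CD_resource_theory F <->
   ((forall A : finType, (0 < #|A|)%N ->
       F (A * A)%type ((#|A|%:R)^-1 *: (@Phi R A))) /\
    (forall (A B : finType) (rho : op R A) (mu : op R (B * A)%type),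
       F A rho -> F (B * A)%type mu ->
       ptr1 mu = (#|A|%:R)^-1 *: idop ->
       F B (#|A|%:R *: link_state mu rho)))).
Proof.
move=> F_ok; split.
  move=> [id_CD _ _ comp_CD _]; split; first exact: id_CD.
  exact: link_closed_of_CD_comp.
move=> [Phi_free F_link]; split.
- exact: Phi_free.
- exact: CD_swap.
- exact: CD_discard.
- by move=> A B C M N _ chN; exact: CD_comp.
- by move=> A B C D M N _ _; exact: CD_partensor.
Qed.
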